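(* The sequence $\Delta(\mathbf{t}_{3/2})$ is $3/2$-automatic.
   Context: Base-$3/2$ expansions: $\langle 0\rangle_{3/2}$ is the empty word, and for $n\ge 1$, writing $2n=3m+d$ with integers $m\ge0$, $d\in\{0,1,2\}$, set $\langle n\rangle_{3/2}=\langle m\rangle_{3/2}\,d$ (a word over $\{0,1,2\}$, most significant digit first). The Thue--Morse word in base $3/2$ is $\mathbf{t}_{3/2}=(t_n)_{n\ge0}$ with $t_n$ the digit sum of $\langle n\rangle_{3/2}$ modulo $2$. For a binary sequence $\mathbf{x}=(x_n)$, $\Delta(\mathbf{x})=(x_{n+1}-x_n\bmod 2)_{n\ge0}$. A sequence $(y_n)_{n\ge0}$ is $3/2$-automatic if there is a deterministic finite automaton with output, over the input alphabet $\{0,1,2\}$, such that for every $n\ge0$, $y_n$ is the output of the state reached after reading $\langle n\rangle_{3/2}$ from the initial state. *)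

From mathcomp Require Import all_boot.
Set Implicit Arguments. Unset Strict Implicit. Unset Printing Implicit Defensive.

Definition digit := 'I_3.

(* Base-3/2 expansion, most significant digit first, computed with fuel.
   For n >= 1, 2n = 3m + d with m = (2n) %/ 3, d = (2n) %% 3, and m < n,
   so fuel n suffices. *)
Fixpoint exp32_aux (fuel n : nat) : seq digit :=
  match fuel with
  | 0 => [::]
  | fuel'.+1 =>
      if n is 0 then [::]
      else rcons (exp32_aux fuel' ((2 * n) %/ 3)) (inord ((2 * n) %% 3))
  end.

Definition exp32 (n : nat) : seq digit := exp32_aux n n.

Definition tm32 (n : nat) : bool := odd (sumn (map (@nat_of_ord 3) (exp32 n))).

Definition Delta (x : nat -> bool) (n : nat) : bool := x n.+1 (+) x n.

Record dfao := DFAO {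
  dfao_state : finType;
  dfao_init : dfao_state;
  dfao_trans : dfao_state -> digit -> dfao_state;
  dfao_out : dfao_state -> bool }.

Definition dfao_run (A : dfao) (w : seq digit) : @dfao_state A :=
  foldl (@dfao_trans A) (@dfao_init A) w.

Definition auto32 (y : nat -> bool) : Prop :=
  exists A : dfao, forall n, y n = @dfao_out A (dfao_run A (exp32 n)).

From mathcomp Require Import all_boot.
From mathcomp Require Import zify.

(* Write 2n = 3m + d, so that <n> = <m> d.  Then 2(n+1) = 3m + (d + 2): for
   d = 0 the expansions of n and n+1 share the prefix <m> and end in the even
   digits 0 and 2, so Delta(n) = 0; for d = 1, 2 the prefix of <n+1> is <m+1>
   and the last digit drops by one, which flips the parity of the last digit,
   so Delta(n) = 1 - Delta(m).  A two-state automaton tracks this. *)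

Lemma exp32_aux_fuel f g n : n <= f -> n <= g -> exp32_aux f n = exp32_aux g n.
Proof.
elim: f g n => [|f IH] [|g] [|n] //= n_le_f n_le_g.
by congr rcons; apply: IH; lia.
Qed.

Lemma exp32_rcons n : 0 < n ->
  exp32 n = rcons (exp32 ((2 * n) %/ 3)) (inord ((2 * n) %% 3)).
Proof.
by case: n => [|n] // _; rewrite /exp32 /=; congr rcons; apply: exp32_aux_fuel; lia.
Qed.

Lemma tm32_rcons n : 0 < n -> tm32 n = tm32 ((2 * n) %/ 3) (+) odd ((2 * n) %% 3).
Proof.
move=> n_gt0; rewrite /tm32 exp32_rcons // map_rcons -cats1 sumn_cat /=.
by rewrite inordK ?ltn_mod // addn0 oddD.
Qed.

Lemma Delta_tm32_rcons n : 0 < n ->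
  Delta tm32 n = ((2 * n) %% 3 != 0) && ~~ Delta tm32 ((2 * n) %/ 3).
Proof.
move=> n_gt0; rewrite /Delta (@tm32_rcons n) // (@tm32_rcons n.+1) //.
set m := (2 * n) %/ 3; set d := (2 * n) %% 3.
have d_lt3 : d < 3 by rewrite ltn_mod.
have next_quo : (2 * n.+1) %/ 3 = m + (d != 0) by rewrite /m /d; case: eqP; lia.
have next_rem : (2 * n.+1) %% 3 = if d == 0 then 2 else d.-1.
  by rewrite /d; case: eqP; lia.
rewrite next_quo next_rem {next_quo next_rem}; clearbody m d.
case: d d_lt3 => [|[|[|]]] //= _; rewrite ?addn0 ?addn1;
  by case: (tm32 m) (tm32 m.+1) => [] [].
Qed.

Definition Delta_tm32_dfao : dfao :=
  @DFAO bool false (fun s (d : digit) => (d != 0 :> nat) && ~~ s) id.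

Theorem lemma9 : auto32 (Delta tm32).
Proof.
exists Delta_tm32_dfao => n; elim/ltn_ind: n => [[|n]] IH.
  by rewrite /Delta (@tm32_rcons 1).
rewrite Delta_tm32_rcons // IH; last by lia.
by rewrite [exp32 n.+1]exp32_rcons // /dfao_run foldl_rcons /= inordK // ltn_mod.
Qed.
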